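(* Let $n\in\mathbb{Z}^+$, $p\geq 1$ and $t\in(1,2]$. Then $$\Gamma_{t^n}(K_n^{p*})\leq \Big(\frac{n}{n+k(n,t)}\Big)^{1/p}\leq \Big(\frac{n}{n+\lfloor a(t)n\rfloor}\Big)^{1/p},$$ $$\Gamma_{t^n}(K_n^{p})\leq \Big(\frac{n}{n+l(n,t)}\Big)^{1/p}\leq \Big(\frac{n}{n+\lfloor b(t)n\rfloor}\Big)^{1/p}.$$
   Context: For a compact convex set $K\subseteq\mathbb{R}^n$ and $m\in\mathbb{Z}^+$, the covering functional is $\Gamma_m(K)=\inf\{\gamma>0:\exists C\subseteq\mathbb{R}^n,\ |C|=m,\ K\subseteq C+\gamma K\}$; for a real number $x\geq1$, $\Gamma_x(K)$ means $\Gamma_{\lfloor x\rfloor}(K)$. $K_n^p=\{(x_1,\dots,x_n)\in\mathbb{R}^n:\sum_{i=1}^n|x_i|^p\leq1\}$ and $K_n^{p*}=\{(x_1,\dots,x_n)\in\mathbb{R}^n:\sum_{i=1}^n x_i^p\leq1,\ x_i\geq0\ \forall i\}$. Let $f(x)=\frac{(1+x)^{1+x}}{x^x}$, $g(x)=\frac{2^x(1+x)^{1+x}}{x^x}$ on $(0,\infty)$ (strictly increasing, tending to $1$ as $x\to0^+$); for $t>1$, $a(t)$ and $b(t)$ are the solutions of $f(x)=t$ and $g(x)=t$. For $t\in(1,2]$, $k(n,t)$ is the nonnegative integer with $\binom{n+k(n,t)}{n}\leq t^n<\binom{n+k(n,t)+1}{n}$ and $l(n,t)$ is the nonnegative integer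 with $2^{l(n,t)}\binom{n+l(n,t)}{n}\leq t^n<2^{l(n,t)+1}\binom{n+l(n,t)+1}{n}$. *)

From HB Require Import structures.
From mathcomp Require Import all_boot all_order all_algebra.
From mathcomp Require Import all_classical all_reals all_analysis.
Set Implicit Arguments. Unset Strict Implicit. Unset Printing Implicit Defensive.
Import Order.TTheory GRing.Theory Num.Theory.
Local Open Scope classical_set_scope.
Local Open Scope ring_scope.

#[local] Unset Implicit Arguments.
Definition Kp {R : realType} (n : nat) (p : R) : set 'rV[R]_n :=
  [set x | \sum_(i < n) `|x ord0 i| `^ p <= 1].

Definition Kpstar {R : realType} (n : nat) (p : R) : set 'rV[R]_n :=
  [set x | \sum_(i < n) (x ord0 i) `^ p <= 1 /\ forall i, 0 <= x ord0 i].

Definition covering_functional {R : realType} {n : nat} (m : nat) (K : set 'rV[R]_n) : R :=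
  inf [set g : R | 0 < g /\
        exists C : 'I_m -> 'rV[R]_n, injective C /\
          K `<=` [set z | exists i : 'I_m, exists2 y, K y & z = C i + g *: y]].

Definition covering_functional_real {R : realType} {n : nat} (x : R) (K : set 'rV[R]_n) : R :=
  covering_functional (Num.truncn x) K.

Definition ff {R : realType} (x : R) : R := (1 + x) `^ (1 + x) / x `^ x.
Definition gg {R : realType} (x : R) : R := 2 `^ x * (1 + x) `^ (1 + x) / x `^ x.

Definition is_k {R : realType} (n : nat) (t : R) (k : nat) : Prop :=
  ('C(n + k, n))%:R <= t ^+ n /\ t ^+ n < ('C(n + k.+1, n))%:R.

Definition is_l {R : realType} (n : nat) (t : R) (l : nat) : Prop :=
  (2 ^ l * 'C(n + l, n))%:R <= t ^+ n /\ t ^+ n < (2 ^ l.+1 * 'C(n + l.+1, n))%:R.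

From HB Require Import structures.
From mathcomp Require Import all_boot all_order all_algebra.
From mathcomp Require Import all_classical all_reals all_analysis.
From mathcomp Require Import zify lra.
Set Implicit Arguments.
Unset Strict Implicit.
Unset Printing Implicit Defensive.
Import Order.TTheory GRing.Theory Num.Theory.
Local Open Scope classical_set_scope.
Local Open Scope ring_scope.

(* Let N = n + k. A point x of K_n^{p*} lies in c + (n / N)^(1/p) K_n^{p*} for the centre
   c_i = (m_i / N)^(1/p), where the integers m_i <= N x_i^p satisfy
   sum_i m_i = min (k, sum_i floor (N x_i^p)): then c <= x and, u |-> u^p being
   superadditive, sum_i (x_i - c_i)^p <= sum_i (x_i^p - m_i / N) <= n / N. The vectors m
   are the 'C(n + k, n) multisets of size k on n + 1 letters. For K_n^p the construction
   is applied to |x| and the signs of x are copied onto c, at the cost of 2^l sign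
   patterns. The second inequalities follow from 'C(n + floor (a n), n) <= f(a)^n = t^n
   (binomial theorem) and the maximality of k and l. *)

Lemma bin_mul_expr_le (R : numDomainType) (a : R) (n m : nat) : 0 <= a ->
  'C(n + m, n)%:R * a ^+ m <= (1 + a) ^+ (n + m).
Proof.
move=> a0; rewrite addrC exprD1n.
have m_lt : (m < (n + m).+1)%N by rewrite ltnS leq_addl.
rewrite (bigD1 (Ordinal m_lt)) //= -[leLHS]addr0.
rewrite -bin_sub ?leq_addr // addKn mulr_natl -mulr_natr.
by apply: lerD => //; apply: sumr_ge0 => i _; rewrite mulrn_wge0 ?exprn_ge0.
Qed.

Section PowR.
Variable R : realType.

Lemma powRV (a r : R) : 0 <= a -> a^-1 `^ r = (a `^ r)^-1.
Proof. by move=> a0; rewrite -powR_inv1 // powRAC powR_inv1 // powR_ge0. Qed.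

Lemma powR_le_id (a p : R) : 0 <= a <= 1 -> 1 <= p -> a `^ p <= a.
Proof.
move=> /andP[a0 a1] p1; have [->|a_neq0] := eqVneq a 0.
  by rewrite powR0 // gt_eqF // (lt_le_trans ltr01 p1).
by apply: ge1r_powR => //; rewrite lt_def a_neq0 a0.
Qed.

Lemma powRD_ge (u v p : R) : 0 <= u -> 0 <= v -> 1 <= p ->
  u `^ p + v `^ p <= (u + v) `^ p.
Proof.
move=> u0 v0 p1; have [/eqP|s_neq0] := eqVneq (u + v) 0.
  rewrite paddr_eq0 // => /andP[/eqP -> /eqP ->].
  by rewrite addr0 powR0 ?addr0 // gt_eqF // (lt_le_trans ltr01 p1).
have s_gt0 : 0 < u + v by rewrite lt_def s_neq0 addr_ge0.
have powR_le x : 0 <= x <= u + v -> x `^ p <= x / (u + v) * (u + v) `^ p.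
  move=> /andP[x0 xs]; have xs0 : 0 <= x / (u + v) := divr_ge0 x0 (ltW s_gt0).
  rewrite -{1}(divfK s_neq0 x) (powRM _ xs0 (ltW s_gt0)).
  apply: ler_wpM2r; rewrite ?powR_ge0 // powR_le_id // xs0 /=.
  by rewrite ler_pdivrMr // mul1r.
apply: le_trans (lerD (powR_le u _) (powR_le v _)) _.
- by rewrite u0 lerDl.
- by rewrite v0 lerDr.
by rewrite -mulrDl -mulrDl divff // mul1r.
Qed.

Lemma sum_powR_scale_le1 (n : nat) (p g : R) (d : 'I_n -> R) :
  0 < g -> (forall i, 0 <= d i) -> \sum_i d i `^ p <= g `^ p ->
  \sum_i (g^-1 * d i) `^ p <= 1.
Proof.
move=> g0 d0 d_le; have gV0 : 0 <= g^-1 by rewrite invr_ge0 ltW.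
under eq_bigr => i _ do rewrite (powRM _ gV0 (d0 i)) (powRV _ (ltW g0)).
by rewrite -mulr_sumr mulrC ler_pdivrMr ?powR_gt0 // mul1r.
Qed.

Lemma ler_ratio_powR (n k m : nat) (r : R) :
  (0 < n)%N -> (m <= k)%N -> 0 <= r ->
  (n%:R / (n + k)%:R) `^ r <= (n%:R / (n + m)%:R) `^ r.
Proof.
move=> n0 mk r0; have nm_gt0 j : 0 < (n + j)%:R :> R by rewrite ltr0n addn_gt0 n0.
apply: ge0_ler_powR => //; try by rewrite nnegrE divr_ge0 // ltW.
by rewrite ler_pM2l ?ltr0n // lef_pV2 ?posrE // ler_nat leq_add2l.
Qed.

Lemma bin_le_ff_expn (a : R) (n : nat) : 0 < a ->
  'C(n + Num.truncn (a * n%:R), n)%:R <= ff a ^+ n.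
Proof.
move=> a0; set m := Num.truncn _; set q := (1 + a) / a.
have a1_gt0 : 0 < 1 + a by rewrite addr_gt0.
have q_ge1 : 1 <= q by rewrite ler_pdivlMr // mul1r lerDr.
have ffE : ff a = (1 + a) * q `^ a.
  rewrite /ff powRD ?(gt_eqF a1_gt0) ?implybT // powRr1 ?ltW //.
  by rewrite powRM ?ltW ?invr_gt0 // powRV ?ltW // mulrA.
have qm_le : q ^+ m <= q `^ (a * n%:R).
  rewrite -powR_mulrn ?(le_trans ler01) //; apply: ler_powR => //.
  by rewrite /m truncn_le mulr_ge0 // ltW.
have am_gt0 : 0 < a ^+ m by rewrite exprn_gt0.
rewrite ffE exprMn -[q `^ a ^+ n]powR_mulrn ?powR_ge0 // -powRrM -(ler_pM2r am_gt0).
apply: le_trans (bin_mul_expr_le _ _ (ltW a0)) _.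
rewrite exprD -mulrA; apply: ler_wpM2l; first by rewrite exprn_ge0 // ltW.
apply: le_trans (ler_wpM2r (ltW am_gt0) qm_le).
by rewrite -exprMn divfK ?gt_eqF.
Qed.

Lemma exp2_bin_le_gg_expn (b : R) (n : nat) : 0 < b ->
  (2 ^ Num.truncn (b * n%:R) * 'C(n + Num.truncn (b * n%:R), n))%:R <= gg b ^+ n.
Proof.
move=> b0; have ggE : gg b = 2 `^ b * ff b by rewrite /gg /ff mulrA.
rewrite ggE exprMn natrM; apply: ler_pM; rewrite ?ler0n ?bin_le_ff_expn //.
rewrite -powR_mulrn // -powRrM natrX -powR_mulrn //.
by apply: ler_powR; rewrite ?ler1n // truncn_le mulr_ge0 // ltW.
Qed.

End PowR.

Lemma nondecreasing_bracket_le (R : realDomainType) (F : nat -> nat) (x : R) (k m : nat) :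
  {homo F : i j / (i <= j)%N} -> x < (F k.+1)%:R -> (F m)%:R <= x -> (m <= k)%N.
Proof.
move=> F_homo x_lt Fm_le; rewrite leqNgt; apply/negP => /F_homo.
rewrite -(ler_nat R) => FkFm.
by have := lt_le_trans x_lt (le_trans FkFm Fm_le); rewrite ltxx.
Qed.

Lemma is_k_max (R : realType) (n : nat) (t : R) (k m : nat) :
  is_k n t k -> 'C(n + m, n)%:R <= t ^+ n -> (m <= k)%N.
Proof.
case=> _; apply: (nondecreasing_bracket_le (F := fun j => 'C(n + j, n))).
by move=> i j ij; rewrite leq_bin2l // leq_add2l.
Qed.

Lemma is_l_max (R : realType) (n : nat) (t : R) (l m : nat) :
  is_l n t l -> (2 ^ m * 'C(n + m, n))%:R <= t ^+ n -> (m <= l)%N.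
Proof.
case=> _; apply: (nondecreasing_bracket_le (F := fun j => 2 ^ j * 'C(n + j, n))%N).
by move=> i j ij; rewrite leq_mul ?leq_pexp2l ?leq_bin2l ?leq_add2l.
Qed.

Lemma exists_le_sum_minn (n k : nat) (beta : nat -> nat) : exists alpha : nat -> nat,
  (forall i, alpha i <= beta i)%N /\
  (\sum_(i < n) alpha i = minn (\sum_(i < n) beta i) k)%N.
Proof.
elim: n k => [|n IH] k; first by exists (fun=> 0%N); rewrite !big_ord0 min0n.
set a := minn (beta n) k.
have [alpha [alpha_le alpha_sum]] := IH (k - a)%N.
exists (fun i => if i == n then a else alpha i); split.
  by move=> i; case: eqP => [->|_] //; rewrite geq_minl.
rewrite !big_ord_recr /= eqxx.
under eq_bigr => i _ do rewrite ltn_eqF //.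
rewrite alpha_sum /a; move: (\sum_(i < n) beta i)%N (beta n) => B b; lia.
Qed.

Lemma card_sorted_tuples_bin (n k : nat) :
  #|[set t : k.-tuple 'I_n.+1 | sorted leq (map val t)]%SET| = 'C(n + k, n).
Proof. by rewrite card_sorted_tuples addnC -bin_sub ?leq_addl // addnK. Qed.

Lemma exists_sorted_tuple_count (n k : nat) (alpha : 'I_n -> nat) :
  (\sum_i alpha i <= k)%N ->
  exists t : k.-tuple 'I_n.+1, sorted leq (map val t) /\
    forall i, count_mem (lift ord_max i) t = alpha i.
Proof.
move=> alpha_sum.
pose s := flatten [seq nseq (alpha i) (lift ord_max i) | i <- enum 'I_n].
have count_s j : count_mem (lift ord_max j) s = alpha j.
  rewrite count_flatten sumnE !big_map (bigD1 j) //= count_nseq /= eqxx mul1n.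
  rewrite big1 ?addn0 // => i ij.
  by rewrite count_nseq /= (inj_eq (@lift_inj _ ord_max)) (negbTE ij) mul0n.
have size_s : size s = (\sum_i alpha i)%N.
  rewrite size_flatten sumnE /shape -map_comp big_map big_enum /=.
  by apply: eq_bigr => i _; rewrite size_nseq.
pose le_val := fun x y : 'I_n.+1 => (val x <= val y)%N.
pose t := sort le_val (s ++ nseq (k - \sum_i alpha i) ord_max).
have size_t : size t == k by rewrite size_sort size_cat size_s size_nseq subnKC.
exists (Tuple size_t); split.
  by rewrite /= sorted_map; apply: sort_sorted => x y; apply: leq_total.
move=> i /=; rewrite count_sort count_cat count_s count_nseq /=.
by rewrite (negbTE (neq_lift ord_max i)) mul0n addn0.
Qed.

Section LatticeCenters.
Variable R : realType.

Lemma exists_multiplicities (n k : nat) (z : 'I_n -> R) :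
  (forall i, 0 <= z i) -> \sum_i z i <= (n + k)%:R ->
  exists alpha : 'I_n -> nat, [/\ forall i, (alpha i)%:R <= z i,
    (\sum_i alpha i <= k)%N & \sum_i (z i - (alpha i)%:R) <= n%:R].
Proof.
move=> z0 z_sum; pose beta j := oapp (fun i : 'I_n => Num.truncn (z i)) 0%N (insub j).
have betaE (i : 'I_n) : beta i = Num.truncn (z i) by rewrite /beta valK.
have [alpha [alpha_le alpha_sum]] := exists_le_sum_minn n k beta.
exists (fun i : 'I_n => alpha i); split.
- move=> i; apply: le_trans (_ : (Num.truncn (z i))%:R <= z i); last by rewrite truncn_le.
  by rewrite ler_nat -betaE.
- by rewrite alpha_sum geq_minr.
rewrite sumrB -natr_sum alpha_sum; case: (leqP (\sum_(i < n) beta i) k) => beta_sum.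
  rewrite natr_sum -sumrB -[n in n%:R]card_ord -sumr_const.
  apply: ler_sum => i _; rewrite betaE lerBlDr addrC natr1.
  exact/ltW/truncnS_gt.
by rewrite lerBlDr -natrD.
Qed.

(* A multiset t over 'I_n.+1 encodes the multiplicities m_i of the letters i < n; the
   letter ord_max absorbs the slack when t has more than sum_i m_i elements. *)
Definition lattice_center (n N : nat) (p : R) (t : seq 'I_n.+1) : 'rV[R]_n :=
  \row_i ((count_mem (lift ord_max i) t)%:R / N%:R) `^ p^-1.

Lemma lattice_center_approx (n k : nat) (p : R) (w : 'I_n -> R) :
  (0 < n)%N -> 1 <= p -> (forall i, 0 <= w i) -> \sum_i w i `^ p <= 1 ->
  exists t : k.-tuple 'I_n.+1, [/\ sorted leq (map val t),
    forall i, lattice_center (n + k) p t ord0 i <= w i &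
    \sum_i (w i - lattice_center (n + k) p t ord0 i) `^ p <= n%:R / (n + k)%:R].
Proof.
move=> n0 p1 w0 w_sum; have p0 : 0 < p := lt_le_trans ltr01 p1.
set N := (n + k)%:R : R; have N0 : 0 < N by rewrite ltr0n addn_gt0 n0.
have z0 i : 0 <= N * w i `^ p by rewrite mulr_ge0 ?powR_ge0 ?ltW.
have z_sum : \sum_i N * w i `^ p <= N by rewrite -mulr_sumr ler_piMr // ltW.
have [alpha [alpha_le alpha_sum alpha_err]] := exists_multiplicities z0 z_sum.
have [t [t_sorted t_count]] := exists_sorted_tuple_count alpha_sum.
exists t; set c := lattice_center _ _ _.
have cpE i : c ord0 i `^ p = (alpha i)%:R / N.
  by rewrite mxE t_count -powRrM mulVf ?gt_eqF // powRr1 // divr_ge0 ?ler0n ?ltW.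
have c_le i : c ord0 i <= w i.
  have wE : w i = (w i `^ p) `^ p^-1 by rewrite -powRrM mulfV ?gt_eqF // powRr1.
  rewrite [leRHS]wE mxE t_count.
  apply: ge0_ler_powR; rewrite ?invr_ge0 ?nnegrE ?powR_ge0 ?divr_ge0 ?ler0n ?(ltW p0) ?(ltW N0) //.
  by rewrite ler_pdivrMr // mulrC.
split => //.
have powR_sub_le i : (w i - c ord0 i) `^ p <= w i `^ p - (alpha i)%:R / N.
  rewrite -cpE lerBrDr; apply: le_trans (powRD_ge _ _ p1) _; rewrite ?subrK ?subr_ge0 //.
  by rewrite mxE powR_ge0.
apply: le_trans (ler_sum _ (fun i _ => powR_sub_le i)) _.
have -> : \sum_i (w i `^ p - (alpha i)%:R / N) = (\sum_i (N * w i `^ p - (alpha i)%:R)) / N.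
  by rewrite mulr_suml; apply: eq_bigr => i _; rewrite mulrBl [N * _]mulrC mulfK ?gt_eqF.
by apply: ler_wpM2r => //; rewrite invr_ge0 ltW.
Qed.

(* The sign of coordinate i is read off s at the first occurrence of i in t;
   coordinates that do not occur in t vanish, so their sign is irrelevant. *)
Definition signed_lattice_center (n N : nat) (p : R) (t : seq 'I_n.+1) (s : seq bool) :
    'rV[R]_n :=
  \row_i (if nth false s (index (lift ord_max i) t) then - lattice_center N p t ord0 i
          else lattice_center N p t ord0 i).

Lemma exists_signed_lattice_center (n N k : nat) (p : R) (t : k.-tuple 'I_n.+1)
    (z : 'rV[R]_n) :
  0 < p -> (forall i, lattice_center N p t ord0 i <= `|z ord0 i|) ->
  exists s : k.-tuple bool, forall i,
    `|z ord0 i - signed_lattice_center N p t s ord0 i|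
      = `|z ord0 i| - lattice_center N p t ord0 i.
Proof.
move=> p0 c_le; set c := lattice_center N p t.
pose sign j := if unlift ord_max j is Some i then z ord0 i < 0 else false.
exists (map_tuple sign t) => i.
have -> : signed_lattice_center N p t (map_tuple sign t) ord0 i
    = if z ord0 i < 0 then - c ord0 i else c ord0 i.
  rewrite mxE -/c; have [t_i|t_Ni] := boolP (lift ord_max i \in val t).
    by rewrite (nth_map ord_max) ?index_mem // nth_index // /sign liftK.
  have -> : c ord0 i = 0.
    by rewrite mxE (count_memPn t_Ni) mul0r powR0 // invr_eq0 gt_eqF.
  by rewrite oppr0 !if_same.
have := c_le i; have c0 : 0 <= c ord0 i by rewrite mxE powR_ge0.
case: ltrP => z_sgn; rewrite ?(ltr0_norm z_sgn) ?(ger0_norm z_sgn) => c_le_i.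
  by rewrite opprK ler0_norm; lra.
by rewrite ger0_norm; lra.
Qed.

Lemma exists_injective_extension (n m : nat) (s : seq 'rV[R]_n) :
  (0 < n)%N -> (size (undup s) <= m)%N ->
  exists C : 'I_m -> 'rV[R]_n, injective C /\ {subset s <= codom C}.
Proof.
move=> n0 s_size; set u := undup s; set i0 := Ordinal n0.
set M := 1 + \sum_(v <- u) `|v ord0 i0|.
have u_lt v : v \in u -> v ord0 i0 < M.
  move=> v_u; rewrite /M (bigD1_seq v v_u (undup_uniq s)) /=.
  have := ler_norm (v ord0 i0); have : 0 <= \sum_(w <- u | w != v) `|w ord0 i0|.
    by rewrite sumr_ge0.
  lra.
pose far (j : nat) : 'rV[R]_n := const_mx (M + j%:R).
pose C (i : 'I_m) := if (i < size u)%N then nth 0 u i else far i.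
have far_new i j : (i < size u)%N -> nth 0 u i != far j.
  move=> i_lt; apply/eqP => /(congr1 (fun v : 'rV[R]_n => v ord0 i0)).
  by rewrite mxE => e; have := u_lt _ (mem_nth 0 i_lt); rewrite e ltNge lerDl ler0n.
exists C; split.
  move=> i j; rewrite /C; case: ifP => i_lt; case: ifP => j_lt.
  - by move/eqP; rewrite nth_uniq ?undup_uniq // => /eqP/val_inj.
  - by move/eqP; rewrite (negbTE (far_new _ _ i_lt)).
  - by move/eqP; rewrite eq_sym (negbTE (far_new _ _ j_lt)).
  - by move/(congr1 (fun v : 'rV[R]_n => v ord0 i0)); rewrite !mxE => /addrI/eqP;
      rewrite eqr_nat => /eqP/val_inj.
move=> v v_s; have v_u : v \in u by rewrite mem_undup.
have v_lt : (index v u < m)%N by apply: leq_trans s_size; rewrite index_mem.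
by apply/codomP; exists (Ordinal v_lt); rewrite /C /= index_mem v_u nth_index.
Qed.

Lemma covering_functional_le (n m : nat) (K : set 'rV[R]_n) (L : seq 'rV[R]_n) (g : R) :
  (0 < n)%N -> 0 < g -> (size (undup L) <= m)%N ->
  (forall z, K z -> exists2 c, c \in L & K (g^-1 *: (z - c))) ->
  covering_functional m K <= g.
Proof.
move=> n0 g0 L_size K_L.
have [C [C_inj L_C]] := exists_injective_extension n0 L_size.
apply: ge_inf; first by exists 0 => x [/ltW].
split => //; exists C; split => // z /K_L [c /L_C /codomP [i ->] K_y].
exists i; exists (g^-1 *: (z - C i)) => //.
by rewrite scalerA mulfV ?gt_eqF // scale1r addrC subrK.
Qed.

Lemma covering_functional_Kpstar_le (n k m : nat) (p : R) :
  (0 < n)%N -> 1 <= p -> ('C(n + k, n) <= m)%N ->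
  covering_functional m (Kpstar n p) <= (n%:R / (n + k)%:R) `^ p^-1.
Proof.
move=> n0 p1 C_le; have p0 : 0 < p := lt_le_trans ltr01 p1.
have ratio_gt0 : 0 < n%:R / (n + k)%:R :> R by rewrite divr_gt0 ?ltr0n ?addn_gt0 ?n0.
set S := [set t : k.-tuple 'I_n.+1 | sorted leq (map val t)]%SET.
apply: (covering_functional_le (L := [seq lattice_center (n + k) p (val t) | t <- enum S])) => //.
- exact: powR_gt0.
- by rewrite (leq_trans (size_undup _)) // size_map -cardE card_sorted_tuples_bin.
move=> z [z_sum z0]; have [t [t_sorted c_le c_err]] := lattice_center_approx k n0 p1 z0 z_sum.
exists (lattice_center (n + k) p t); first by apply: map_f; rewrite mem_enum inE.
move: (lattice_center _ _ _) c_le c_err => c c_le c_err; split.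
  under eq_bigr => i _ do rewrite !mxE.
  apply: sum_powR_scale_le1 => [|i|]; first exact: powR_gt0.
  - by rewrite subr_ge0.
  - by rewrite -powRrM mulVf ?gt_eqF // powRr1 // ltW.
by move=> i; rewrite !mxE mulr_ge0 ?invr_ge0 ?powR_ge0 ?subr_ge0.
Qed.

Lemma covering_functional_Kp_le (n l m : nat) (p : R) :
  (0 < n)%N -> 1 <= p -> (2 ^ l * 'C(n + l, n) <= m)%N ->
  covering_functional m (Kp n p) <= (n%:R / (n + l)%:R) `^ p^-1.
Proof.
move=> n0 p1 C_le; have p0 : 0 < p := lt_le_trans ltr01 p1.
have ratio_gt0 : 0 < n%:R / (n + l)%:R :> R by rewrite divr_gt0 ?ltr0n ?addn_gt0 ?n0.
set S := [set t : l.-tuple 'I_n.+1 | sorted leq (map val t)]%SET.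
apply: (covering_functional_le (L := [seq signed_lattice_center (n + l) p (val t) (val s)
                                     | t <- enum S, s <- enum {: l.-tuple bool}])) => //.
- exact: powR_gt0.
- rewrite (leq_trans (size_undup _)) // size_allpairs -!cardE card_sorted_tuples_bin.
  by rewrite card_tuple card_bool mulnC.
move=> z z_sum; have z0 i : 0 <= `|z ord0 i| by [].
have [t [t_sorted c_le c_err]] := lattice_center_approx l n0 p1 z0 z_sum.
have [s c_dist] := exists_signed_lattice_center p0 c_le.
exists (signed_lattice_center (n + l) p t s).
  by apply: allpairs_f; rewrite mem_enum inE.
move: (signed_lattice_center _ _ _ _) c_dist => c c_dist.
set g := _ `^ p^-1; have g0 : 0 < g by apply: powR_gt0.
rewrite /Kp /=; under eq_bigr => i _ do rewrite !mxE normrM gtr0_norm ?invr_gt0 // c_dist.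
apply: sum_powR_scale_le1 => [|i|]; first exact: powR_gt0.
- by rewrite subr_ge0.
- by rewrite -powRrM mulVf ?gt_eqF // powRr1 // ltW.
Qed.

End LatticeCenters.

Theorem proposition3p3 (R : realType) (n : nat) (p t : R)
  (hn : (0 < n)%N) (hp : 1 <= p) (ht1 : 1 < t) (ht2 : t <= 2)
  (k l : nat) (hk : is_k n t k) (hl : is_l n t l)
  (a b : R) (ha0 : 0 < a) (ha : ff a = t) (hb0 : 0 < b) (hb : gg b = t) :
  (covering_functional_real (t ^+ n) (Kpstar n p)
     <= (n%:R / (n + k)%:R) `^ p^-1
   /\ (n%:R / (n + k)%:R) `^ p^-1
     <= (n%:R / (n + Num.truncn (a * n%:R))%:R) `^ p^-1)
  /\
  (covering_functional_real (t ^+ n) (Kp n p)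
     <= (n%:R / (n + l)%:R) `^ p^-1
   /\ (n%:R / (n + l)%:R) `^ p^-1
     <= (n%:R / (n + Num.truncn (b * n%:R))%:R) `^ p^-1).
Proof.
have pV0 : 0 <= p^-1 by rewrite invr_ge0 (le_trans ler01).
have tn0 : 0 <= t ^+ n by rewrite exprn_ge0 // ltW // (lt_trans ltr01 ht1).
rewrite /covering_functional_real; split; split.
- by apply: covering_functional_Kpstar_le; rewrite ?truncn_ge_nat //; case: hk.
- by apply: ler_ratio_powR => //; apply: (is_k_max hk); rewrite -ha bin_le_ff_expn.
- by apply: covering_functional_Kp_le; rewrite ?truncn_ge_nat //; case: hl.
- by apply: ler_ratio_powR => //; apply: (is_l_max hl); rewrite -hb exp2_bin_le_gg_expn.
Qed.
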